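(* Let $(R,\mathfrak m)$ be a noetherian local ring and $x_1,\dots,x_i\in R$, and write $I=(x_1,\dots,x_i)R$. Then $$\operatorname{Ass}_R\big(D(H^i_I(R))\big)\subseteq\operatorname{Att}_R\big(H^i_I(R)\big)\subseteq\{\mathfrak p\in\operatorname{Spec}(R)\mid H^i_I(R/\mathfrak p)\neq 0\}.$$
   Context: $E=E_R(R/\mathfrak m)$ is an injective hull of $R/\mathfrak m$ and $D(\cdot)=\operatorname{Hom}_R(\cdot,E)$. For an arbitrary $R$-module $N$: $\operatorname{Ass}_R(N)$ is the set of primes $\mathfrak p$ with $\mathfrak p=\operatorname{Ann}_R(n)$ for some $n\in N$; $\operatorname{Att}_R(N)$ is the set of primes $\mathfrak p$ with $\mathfrak p=\operatorname{Ann}_R(N/U)$ for some submodule $U\subseteq N$. *)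

From HB Require Import structures.
From mathcomp Require Import all_boot all_order all_algebra.
Set Implicit Arguments. Unset Strict Implicit. Unset Printing Implicit Defensive.
Import Order.TTheory GRing.Theory Num.Theory.
Local Open Scope ring_scope.

Section Commalg.
Variable R : comUnitRingType.

Definition is_ideal (J : R -> Prop) : Prop :=
  J 0 /\ (forall a b, J a -> J b -> J (a + b)) /\ (forall r a, J a -> J (r * a)).

Definition is_prime_ideal (p : R -> Prop) : Prop :=
  is_ideal p /\ ~ p 1 /\ (forall a b, p (a * b) -> p a \/ p b).

Definition noetherian_ring : Prop :=
  forall I : nat -> R -> Prop, (forall n, is_ideal (I n)) ->
    (forall n r, I n r -> I n.+1 r) ->
    exists N, forall n r, (N <= n)%N -> (I n r <-> I N r).

Definition local_ring (m : R -> Prop) : Prop :=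
  is_ideal m /\ ~ m 1 /\ (forall r, m r <-> r \isn't a GRing.unit).

Definition injective_module (E : lmodType R) : Prop :=
  forall (A B : lmodType R) (i : {linear A -> B}) (f : {linear A -> E}),
    injective i -> exists g : {linear B -> E}, forall a, g (i a) = f a.

(* E is an injective hull of R/m: E is injective and contains an element e with
   Ann(e) = m (so R e ~ R/m), such that R e ⊆ E is essential. *)
Definition injective_hull_residue (m : R -> Prop) (E : lmodType R) : Prop :=
  injective_module E /\
  exists e : E, (forall r, m r <-> r *: e = 0) /\
    (forall y : E, y != 0 -> exists r, r *: y != 0 /\ exists s, r *: y = s *: e).

(* ---- Top local cohomology H^i_I(R/J), I = (x_1,...,x_i), via the Cech complex:
   H^i_I(R/J) = (R/J)_{x_1...x_i} / sum_j im((R/J)_{x_1..^x_j..x_i}).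
   An element is represented by a pair (a, n) standing for the class of a/(x_1...x_i)^n. *)
Variables (i : nat) (x : 'I_i -> R).

Definition xprod : R := \prod_(j < i) x j.

(* (a, n) represents 0 in H^i_I(R/J) iff  x^t a ∈ (x_1^(n+t), ..., x_i^(n+t)) + J  for some t *)
Definition cech_zero (J : R -> Prop) (h : R * nat) : Prop :=
  exists t (c : 'I_i -> R),
    J (xprod ^+ t * h.1 - \sum_(j < i) c j * x j ^+ (h.2 + t)).

Definition cech_eq (J : R -> Prop) (h k : R * nat) : Prop :=
  cech_zero J (h.1 * xprod ^+ k.2 - k.1 * xprod ^+ h.2, (h.2 + k.2)%N).

Definition cech_add (h k : R * nat) : R * nat :=
  (h.1 * xprod ^+ k.2 + k.1 * xprod ^+ h.2, (h.2 + k.2)%N).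

Definition cech_scale (r : R) (h : R * nat) : R * nat := (r * h.1, h.2).

Definition cech_zero_elt : R * nat := (0, 0%N).

Definition ideal0 : R -> Prop := fun r => r = 0.

(* R-linear maps H^i_I(R) -> E, i.e. elements of D(H^i_I(R)) = Hom_R(H^i_I(R), E),
   given on representatives. *)
Definition cech_linear (E : lmodType R) (f : R * nat -> E) : Prop :=
  (forall h k, cech_eq ideal0 h k -> f h = f k) /\
  (forall h k, f (cech_add h k) = f h + f k) /\
  (forall r h, f (cech_scale r h) = r *: f h).

Definition Ass_D_cech (E : lmodType R) (p : R -> Prop) : Prop :=
  is_prime_ideal p /\
  exists f : R * nat -> E, cech_linear f /\
    (forall r, p r <-> (forall h, r *: f h = 0)).

(* Submodules of H^i_I(R), given as saturated predicates on representatives. *)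
Definition cech_submodule (U : R * nat -> Prop) : Prop :=
  (forall h k, cech_eq ideal0 h k -> U h -> U k) /\
  U cech_zero_elt /\
  (forall h k, U h -> U k -> U (cech_add h k)) /\
  (forall r h, U h -> U (cech_scale r h)).

(* Att_R(H^i_I(R)): primes p = Ann_R(H/U) for a submodule U. *)
Definition Att_cech (p : R -> Prop) : Prop :=
  is_prime_ideal p /\
  exists U, cech_submodule U /\ (forall r, p r <-> (forall h, U (cech_scale r h))).

Definition cech_nonzero (J : R -> Prop) : Prop := exists h, ~ cech_zero J h.

End Commalg.

(** For [f] in [D(H)], [H = H^i_I(R)], the annihilator of [f] is that of its
    image [f(H) ~ H / ker f], so every associated prime of [D(H)] is attached
    to [H] through [U = ker f]. Conversely, if [p = Ann(H/U)] then [pH <= U].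
    On Čech representatives, [a/x^n] vanishes in [H^i_I(R/p)] exactly when
    [x^t a = q + sum_j c_j x_j^(n+t)] with [q] in [p]; this writes [a/x^n] as
    an element of [pH] plus a boundary. So [H^i_I(R/p) = 0] would force
    [U = H] and [p = R]. Neither inclusion uses that [R] is noetherian or
    local, nor any property of [E]. *)

From HB Require Import structures.
From mathcomp Require Import all_boot all_order all_algebra.
From mathcomp Require Import zify.
From Stdlib Require Import Classical.
Set Implicit Arguments. Unset Strict Implicit.
Import GRing.Theory.
Local Open Scope ring_scope.

Section CechTop.
Variables (R : comUnitRingType) (i : nat) (x : 'I_i -> R).

Lemma cech_eq_cross (h k : R * nat) :
  h.1 * xprod x ^+ k.2 = k.1 * xprod x ^+ h.2 -> cech_eq x (@ideal0 R) h k.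
Proof.
move=> cross; exists 0%N, (fun _ => 0); rewrite /ideal0 /= cross subrr.
by rewrite expr0 mul1r big1 ?subr0 // => j _; rewrite mul0r.
Qed.

Lemma cech_eq0_sum_powers (c : 'I_i -> R) (n : nat) :
  cech_eq x (@ideal0 R) (cech_zero_elt R) (\sum_(j < i) c j * x j ^+ n, n).
Proof.
exists 0%N, (fun j => - c j); rewrite /ideal0 /= expr0 mul0r mul1r sub0r.
rewrite mulr1 add0n addn0 -sumrN -sumrB big1 // => j _.
by rewrite mulNr opprK addNr.
Qed.

Lemma cech_submodule_kernel (E : lmodType R) (f : R * nat -> E) :
  cech_linear x f -> cech_submodule x (fun h => f h = 0).
Proof.
move=> [f_eq [fD fZ]]; split; first by move=> h k /f_eq ->.
split; first by have := fZ 0 (cech_zero_elt R); rewrite scale0r /cech_scale /= mul0r.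
split; first by move=> h k fh0 fk0; rewrite fD fh0 fk0 addr0.
by move=> r h fh0; rewrite fZ fh0 scaler0.
Qed.

Lemma Ass_D_cech_Att (E : lmodType R) (p : R -> Prop) :
  Ass_D_cech x E p -> Att_cech x p.
Proof.
move=> [p_prime [f [f_lin annf]]]; split=> //.
exists (fun h => f h = 0); split; first exact: cech_submodule_kernel.
have [_ [_ fZ]] := f_lin.
by move=> r; rewrite annf; split=> ann h; [rewrite fZ ann | rewrite -fZ ann].
Qed.

Lemma cech_submodule_full (J : R -> Prop) (U : R * nat -> Prop) :
  cech_submodule x U -> (forall r, J r -> forall h, U (cech_scale r h)) ->
  (forall h, cech_zero x J h) -> forall h, U h.
Proof.
move=> [U_eq [U0 [UD _]]] JH_U cech_J_zero [a n].
have [t [c q_in_J]] := cech_J_zero (a, n); move: q_in_J => /=.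
set s := \sum_(j < i) c j * x j ^+ (n + t); set q := _ - s => q_in_J.
have Uq : U (q, (n + t)%N).
  by have := JH_U q q_in_J (1, (n + t)%N); rewrite /cech_scale /= mulr1.
have Us : U (s, (n + t)%N) by apply: U_eq U0; apply: cech_eq0_sum_powers.
apply: (U_eq _ _ _ (UD _ _ Uq Us)); apply: cech_eq_cross => /=.
rewrite -mulrDl /q subrK -!mulrA -!exprD mulrCA -exprD.
by congr (_ * _ ^+ _); lia.
Qed.

Lemma Att_cech_nonzero (p : R -> Prop) : Att_cech x p -> cech_nonzero x p.
Proof.
move=> [[_ [p1 _]] [U [U_sub annU]]]; apply: NNPP => cech_p_trivial.
have cech_p_zero : forall h, cech_zero x p h by apply: not_ex_not_all.
apply/p1/annU => h; apply: (cech_submodule_full U_sub _ cech_p_zero) => r.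
exact: (proj1 (annU r)).
Qed.

End CechTop.

Theorem mainTheorem8 (R : comUnitRingType) (m : R -> Prop)
  (HN : noetherian_ring R) (HL : local_ring m)
  (E : lmodType R) (HE : injective_hull_residue m E)
  (i : nat) (x : 'I_i -> R) :
  (forall p : R -> Prop, Ass_D_cech x E p -> Att_cech x p) /\
  (forall p : R -> Prop, Att_cech x p -> is_prime_ideal p /\ cech_nonzero x p).
Proof.
split=> p; first exact: Ass_D_cech_Att.
by move=> Attp; split; [case: Attp | exact: Att_cech_nonzero].
Qed.
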